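(* For every composition $I=(i_1,\dots,i_j)$ (positive integers, $j\ge1$): (a) $\eta_{1,1}(M_I)=\zeta(i_j+1,i_{j-1},\dots,i_1)$; (b) $\eta_{0,1,1}(M_I)=1$ if $I=(1)$; $\eta_{0,1,1}(M_I)=\eta_{0,1,1}(M_{(i_1,\dots,i_{j-1})})$ if $i_j=1$ and $j\ge2$; and $\eta_{0,1,1}(M_I)=\zeta(i_j,i_{j-1},\dots,i_1)-\eta_{0,1,1}(M_{(i_1,\dots,i_{j-1},i_j-1)})$ if $i_j\ge2$.
   Context: For a composition $I=(i_1,\dots,i_j)$ and $n\ge1$, let $M_I(n)=\sum_{1\le n_1<n_2<\cdots<n_j\le n}n_1^{-i_1}\cdots n_j^{-i_j}$ (this is the monomial quasi-symmetric function $M_I$ evaluated at $x_r=1/r$ for $r\le n$ and $x_r=0$ for $r>n$). For nonnegative integers $s_1,\dots,s_k$ with $s_1+\dots+s_k\ge2$, $\eta_{s_1,\dots,s_k}(M_I)=\sum_{n=1}^\infty\frac{M_I(n)}{n^{s_1}(n+1)^{s_2}\cdots(n+k-1)^{s_k}}$, extended linearly to quasi-symmetric functions. Multiple zeta values: for positive integers $a_1,\dots,a_k$ with $a_1\ge2$, $\zeta(a_1,\dots,a_k)=\sum_{n_1>\cdots>n_k\ge1}n_1^{-a_1}\cdots n_k^{-a_k}$. *)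

From Stdlib Require Import Reals List.
Import ListNotations.
Open Scope R_scope.

Fixpoint sumR (f : nat -> R) (k : nat) : R :=
  match k with
  | O => 0
  | S k' => sumR f k' + f k'
  end.

(* Mr I a n = sum over a < n_1 < ... < n_j <= n of n_1^{-i_1} ... n_j^{-i_j},
   for I = [i_1; ...; i_j]  (empty product/sum convention: Mr [] a n = 1). *)
Fixpoint Mr (I : list nat) (a n : nat) : R :=
  match I with
  | [] => 1
  | i :: I' => sumR (fun t => let m := (a + 1 + t)%nat in
                               / (INR m ^ i) * Mr I' m n) (n - a)
  end.

(* M_I(n): monomial quasi-symmetric function at x_r = 1/r (r <= n), 0 otherwise. *)
Definition M (I : list nat) (n : nat) : R := Mr I 0 n.

Fixpoint denom (s : list nat) (n : nat) : R :=
  match s with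
  | [] => 1
  | a :: s' => INR n ^ a * denom s' (S n)
  end.

(* term of the series eta_{s}(M_I), indexed so that index m corresponds to n = m+1 *)
Definition eta_term (s : list nat) (I : list nat) (m : nat) : R :=
  M I (S m) / denom s (S m).

(* Truncated multiple zeta sum:
   mzv_partial [a_1;...;a_k] N = sum_{N >= n_1 > ... > n_k >= 1} n_1^{-a_1} ... n_k^{-a_k}.
   zeta(a_1,...,a_k) is its limit as N -> infinity. *)
Fixpoint mzv_partial (a : list nat) (N : nat) : R :=
  match a with
  | [] => 1
  | a1 :: a' => sumR (fun t => let n := S t in / (INR n ^ a1) * mzv_partial a' t) N
  end.

Definition composition (I : list nat) : Prop := I <> [] /\ Forall (fun i => (0 < i)%nat) I.

(* Write I = (J, i). Since M_I(n) - M_I(n-1) = n^-i M_J(n-1) and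
   1/(n(n+1)) = 1/n - 1/(n+1), summation by parts turns the N-th partial sum of
   eta_{1,1}(M_I) into sum_{n <= N} n^-(i+1) M_J(n-1), a partial sum of
   zeta(i+1, rev J), minus the boundary term M_I(N)/(N+1); for eta_{0,1,1} one gets
   sum_{n <= N} n^-i M_J(n-1)/(n+1) minus M_I(N)/(N+2).  These weighted sums are bounded
   by 2^(j+1), by induction on the depth using n^-e <= 2/(n(n+1)) for e >= 2 and the same
   summation by parts, and the boundary terms tend to 0 by Kronecker's lemma.  Part (b)
   then comes from an index shift when i = 1 and from
   n^-i/(n+1) = n^-i - n^-(i-1)/(n+1) when i >= 2. *)

From Stdlib Require Import Reals List Lra Lia.
Import ListNotations.
Open Scope R_scope.

Lemma sumR_ext (f g : nat -> R) (N : nat) :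
  (forall t, (t < N)%nat -> f t = g t) -> sumR f N = sumR g N.
Proof.
  induction N as [|N IH]; intros Hfg; simpl; [reflexivity|].
  rewrite IH, Hfg; [reflexivity | lia | intros; apply Hfg; lia].
Qed.

Lemma sumR_plus (f g : nat -> R) (N : nat) :
  sumR (fun t => f t + g t) N = sumR f N + sumR g N.
Proof. induction N as [|N IH]; simpl; [ring | rewrite IH; ring]. Qed.

Lemma sumR_minus (f g : nat -> R) (N : nat) :
  sumR (fun t => f t - g t) N = sumR f N - sumR g N.
Proof. induction N as [|N IH]; simpl; [ring | rewrite IH; ring]. Qed.

Lemma sumR_scal (c : R) (f : nat -> R) (N : nat) :
  sumR (fun t => c * f t) N = c * sumR f N.
Proof. induction N as [|N IH]; simpl; [ring | rewrite IH; ring]. Qed.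

Lemma sumR_le (f g : nat -> R) (N : nat) :
  (forall t, f t <= g t) -> sumR f N <= sumR g N.
Proof.
  intros Hfg; induction N as [|N IH]; simpl; [lra|].
  specialize (Hfg N); lra.
Qed.

Lemma sumR_nonneg (f : nat -> R) (N : nat) : (forall t, 0 <= f t) -> 0 <= sumR f N.
Proof. intros Hf; induction N as [|N IH]; simpl; [lra | specialize (Hf N); lra]. Qed.

Lemma sumR_succ_l (f : nat -> R) (N : nat) :
  sumR f (S N) = f 0%nat + sumR (fun t => f (S t)) N.
Proof. induction N as [|N IH]; [simpl; ring | cbn [sumR] in *; rewrite IH; ring]. Qed.

Lemma sum_f_R0_sumR (f : nat -> R) (N : nat) : sum_f_R0 f N = sumR f (S N).
Proof. induction N as [|N IH]; simpl; [ring | rewrite IH; reflexivity]. Qed.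

Lemma infinite_sum_sumR_ext (f g : nat -> R) : (forall t, g t = f t) ->
  forall L, Un_cv (sumR f) L -> infinite_sum g L.
Proof.
  intros Hfg L HL. apply (Un_cv_ext (fun N => sumR f (N + 1))).
  - intros N; rewrite sum_f_R0_sumR, Nat.add_1_r. apply sumR_ext; intros; rewrite Hfg; reflexivity.
  - exact (CV_shift' _ 1 _ HL).
Qed.

Lemma sumR_nonneg_bounded_cv (f : nat -> R) (B : R) :
  (forall t, 0 <= f t) -> (forall N, sumR f N <= B) -> exists L, Un_cv (sumR f) L.
Proof.
  intros Hf HB. destruct (growing_cv (sumR f)) as [L HL].
  - intros N; simpl; specialize (Hf N); lra.
  - exists B; intros x [N ->]; apply HB.
  - exists L; exact HL.
Qed.

Lemma Un_cv_0_squeeze (u v : nat -> R) :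
  (forall n, 0 <= v n <= u n) -> Un_cv u 0 -> Un_cv v 0.
Proof.
  intros Huv Hu eps Heps. destruct (Hu eps Heps) as [N HN]. exists N; intros n Hn.
  specialize (HN n Hn); specialize (Huv n). unfold Rdist in *.
  rewrite Rminus_0_r, Rabs_pos_eq in * by lra. lra.
Qed.

Lemma INR_S_pos (n : nat) : 0 < INR (S n).
Proof. apply lt_0_INR; lia. Qed.

Lemma inv_INR_S_cv0 : Un_cv (fun n => / INR (S n)) 0.
Proof.
  apply cv_infty_cv_0. intros B. destruct (INR_archimed 1 B) as [N HN]; [lra|].
  exists N; intros n Hn. apply le_INR in Hn. rewrite S_INR. lra.
Qed.

Lemma sumR_telescope_inv (N : nat) :
  sumR (fun t => / (INR (S t) * INR (S (S t)))) N = 1 - / INR (S N).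
Proof.
  induction N as [|N IH]; cbn [sumR]; [simpl; field|].
  rewrite IH, (S_INR (S N)). pose proof (INR_S_pos N). field; lra.
Qed.

Lemma sumR_by_parts (f : nat -> R) (k N : nat) : f 0%nat = 0 ->
  sumR (fun t => f (S t) / (INR (S (k + t)) * INR (S (S (k + t))))) N
    + f N / INR (S (k + N))
  = sumR (fun t => (f (S t) - f t) / INR (S (k + t))) N.
Proof.
  intros Hf0. induction N as [|N IH]; cbn [sumR].
  - rewrite Hf0; unfold Rdiv; ring.
  - rewrite <- IH, Nat.add_succ_r, (S_INR (S (k + N))).
    pose proof (INR_S_pos (k + N)). field; lra.
Qed.

(* Kronecker's lemma, reduced to Cesaro's theorem for the partial sums [W] through
   the summation by parts [sumR a N = (N + 1) W N - sumR W (N + 1)]. *)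
Lemma kronecker (a : nat -> R) (w : R) :
  Un_cv (sumR (fun t => a t / INR (S t))) w -> Un_cv (fun N => sumR a N / INR (S N)) 0.
Proof.
  set (W := sumR (fun t => a t / INR (S t))). intros HW.
  assert (Hparts : forall N, sumR a N = INR (S N) * W N - sumR W (S N)).
  { induction N as [|N IH]; [simpl; ring|].
    cbn [sumR] in *. rewrite IH. unfold W; cbn [sumR]. rewrite (S_INR (S N)).
    pose proof (INR_S_pos N). field; lra. }
  assert (Hces : Un_cv (fun N => sumR W (S N) / INR (S N)) w).
  { apply (Un_cv_ext (fun N => sum_f_R0 W (pred (N + 1)) / INR (N + 1))).
    - intros N; rewrite Nat.add_1_r, sum_f_R0_sumR; reflexivity.
    - exact (CV_shift' _ 1 _ (Cesaro_1 W w HW)). }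
  replace 0 with (w - w) by ring.
  apply (Un_cv_ext (fun N => W N - sumR W (S N) / INR (S N))); [|exact (CV_minus _ _ _ _ HW Hces)].
  intros N; rewrite Hparts. pose proof (INR_S_pos N). field; lra.
Qed.

Lemma Mr_self (J : list nat) (a : nat) : J <> [] -> Mr J a a = 0.
Proof. destruct J; [congruence|]. intros _; simpl; rewrite Nat.sub_diag; reflexivity. Qed.

Lemma Mr_snoc_S (J : list nat) (i a n : nat) : (a <= n)%nat ->
  Mr (J ++ [i]) a (S n) = Mr (J ++ [i]) a n + / INR (S n) ^ i * Mr J a n.
Proof.
  revert a; induction J as [|j J IH]; intros a Han; cbn [Mr app];
    replace (S n - a)%nat with (S (n - a)) by lia; cbn [sumR];
    replace (a + 1 + (n - a))%nat with (S n) by lia; [reflexivity|].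
  rewrite Mr_self by (destruct J; discriminate). rewrite Rmult_0_r, Rplus_0_r.
  rewrite (sumR_ext _ (fun t => / INR (a + 1 + t) ^ j * Mr (J ++ [i]) (a + 1 + t) n
     + / INR (S n) ^ i * (/ INR (a + 1 + t) ^ j * Mr J (a + 1 + t) n))).
  - rewrite sumR_plus, sumR_scal; reflexivity.
  - intros t Ht; cbv zeta; rewrite IH by lia; ring.
Qed.

Lemma M_snoc_0 (J : list nat) (i : nat) : M (J ++ [i]) 0 = 0.
Proof. apply Mr_self; destruct J; discriminate. Qed.

Lemma M_snoc_S (J : list nat) (i n : nat) :
  M (J ++ [i]) (S n) = M (J ++ [i]) n + / INR (S n) ^ i * M J n.
Proof. apply Mr_snoc_S; lia. Qed.

Lemma M_snoc (J : list nat) (i N : nat) :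
  M (J ++ [i]) N = sumR (fun t => / INR (S t) ^ i * M J t) N.
Proof. induction N as [|N IH]; [apply M_snoc_0 | rewrite M_snoc_S, IH; reflexivity]. Qed.

Lemma inv_INR_S_pow_pos (n i : nat) : 0 < / INR (S n) ^ i.
Proof. apply Rinv_0_lt_compat, pow_lt, INR_S_pos. Qed.

Lemma M_nonneg (J : list nat) (n : nat) : 0 <= M J n.
Proof.
  revert n; induction J as [|i J IH] using rev_ind; intros n; [unfold M; simpl; lra|].
  rewrite M_snoc. apply sumR_nonneg; intros t.
  apply Rmult_le_pos; [left; apply inv_INR_S_pow_pos | apply IH].
Qed.

Lemma M_le_S (J : list nat) (n : nat) : M J n <= M J (S n).
Proof.
  destruct J as [|j J] using rev_ind; [unfold M; simpl; lra|].
  rewrite M_snoc_S. pose proof (inv_INR_S_pow_pos n j). pose proof (M_nonneg J n).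
  assert (0 <= / INR (S n) ^ j * M J n) by (apply Rmult_le_pos; lra). lra.
Qed.

Lemma mzv_partial_rev (J : list nat) (N : nat) : mzv_partial (rev J) N = M J N.
Proof.
  revert N; induction J as [|i J IH] using rev_ind; intros N; [reflexivity|].
  rewrite rev_app_distr, M_snoc; cbn [rev app mzv_partial].
  apply sumR_ext; intros t _; rewrite IH; reflexivity.
Qed.

(* The n-th term of eta_{0,...,0,1,1}(M_J) with k leading zeros, indexed from t = n - 1. *)
Definition eta_shifted (k : nat) (J : list nat) (t : nat) : R :=
  M J (S t) / (INR (S (k + t)) * INR (S (S (k + t)))).

Lemma eta_term_11 (J : list nat) (t : nat) : eta_term [1%nat; 1%nat] J t = eta_shifted 0 J t.
Proof. unfold eta_term, eta_shifted; cbn [denom]; rewrite !pow_1, !Rmult_1_r; reflexivity. Qed.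

Lemma eta_term_011 (J : list nat) (t : nat) :
  eta_term [0%nat; 1%nat; 1%nat] J t = eta_shifted 1 J t.
Proof.
  unfold eta_term, eta_shifted; cbn [denom]. rewrite !pow_1, pow_O, !Rmult_1_r, Rmult_1_l.
  reflexivity.
Qed.

Lemma eta_shifted_snoc_by_parts (k : nat) (J : list nat) (i N : nat) :
  sumR (eta_shifted k (J ++ [i])) N + M (J ++ [i]) N / INR (S (k + N))
  = sumR (fun t => / INR (S t) ^ i * M J t / INR (S (k + t))) N.
Proof.
  unfold eta_shifted; rewrite (sumR_by_parts (M (J ++ [i])) k N (M_snoc_0 J i)).
  apply sumR_ext; intros t _; rewrite M_snoc_S; unfold Rdiv; ring.
Qed.

Lemma inv_pow_div (x m : R) (i : nat) : x <> 0 -> / x ^ i * m / x = / x ^ S i * m.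
Proof. intros Hx; cbn [pow]; field; split; [apply pow_nonzero|]; exact Hx. Qed.

Lemma inv_pow_le_telescoping (x : R) (e : nat) :
  1 <= x -> (2 <= e)%nat -> / x ^ e <= 2 * / (x * (x + 1)).
Proof.
  intros Hx He.
  assert (/ x ^ e <= / x ^ 2) by (apply Rinv_le_contravar; [apply pow_lt; lra | apply Rle_pow; auto]).
  assert (/ x ^ 2 <= 2 * / (x * (x + 1))); [|lra].
  replace (2 * / (x * (x + 1))) with (/ (x * (x + 1) / 2)) by (field; lra).
  apply Rinv_le_contravar; nra.
Qed.

Definition positive_parts (J : list nat) : Prop := Forall (fun i => (0 < i)%nat) J.

Lemma mzv_head_bound (J : list nat) : positive_parts J -> forall e N, (2 <= e)%nat ->
  sumR (fun t => / INR (S t) ^ e * M J t) N <= 2 ^ S (length J).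
Proof.
  induction J as [|i J IH] using rev_ind; intros HJ e N He.
  - apply Rle_trans with (2 * sumR (fun t => / (INR (S t) * INR (S (S t)))) N).
    + rewrite <- sumR_scal; apply sumR_le; intros t. unfold M; simpl Mr.
      rewrite Rmult_1_r, (S_INR (S t)). apply inv_pow_le_telescoping; [|exact He].
      rewrite S_INR; pose proof (pos_INR t); lra.
    + rewrite sumR_telescope_inv. pose proof (Rinv_0_lt_compat _ (INR_S_pos N)). cbn [length pow]; lra.
  - apply Forall_app in HJ as [HJ Hi]; apply Forall_inv in Hi.
    apply Rle_trans with (2 * sumR (eta_shifted 0 (J ++ [i])) N).
    + rewrite <- sumR_scal; apply sumR_le; intros t. unfold eta_shifted; cbn [Nat.add].
      rewrite (S_INR (S t)). pose proof (INR_S_pos t).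
      pose proof (M_le_S (J ++ [i]) t). pose proof (M_nonneg (J ++ [i]) t).
      assert (Hx : / INR (S t) ^ e <= 2 * / (INR (S t) * (INR (S t) + 1))).
      { apply inv_pow_le_telescoping; [rewrite S_INR; pose proof (pos_INR t); lra | exact He]. }
      set (q := / (INR (S t) * (INR (S t) + 1))) in *.
      assert (0 < q) by (apply Rinv_0_lt_compat; nra).
      unfold Rdiv; fold q.
      apply Rle_trans with (2 * q * M (J ++ [i]) t); [apply Rmult_le_compat_r; lra | nra].
    + pose proof (eta_shifted_snoc_by_parts 0 J i N) as Hparts.
      assert (0 <= M (J ++ [i]) N / INR (S N)).
      { apply Rmult_le_pos; [apply M_nonneg | left; apply Rinv_0_lt_compat, INR_S_pos]. }
      rewrite (sumR_ext (fun t => / INR (S t) ^ i * M J t / INR (S (0 + t)))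
                        (fun t => / INR (S t) ^ S i * M J t)) in Hparts
        by (intros; apply inv_pow_div, not_0_INR; lia).
      pose proof (IH HJ (S i) N ltac:(lia)).
      cbn [Nat.add] in Hparts. rewrite length_app, Nat.add_1_r.
      change (2 ^ S (S (length J))) with (2 * 2 ^ S (length J)). lra.
Qed.


Lemma snoc_weighted_sum_cv (k : nat) (J : list nat) (i : nat) :
  positive_parts J -> (1 <= i)%nat ->
  exists L, Un_cv (sumR (fun t => / INR (S t) ^ i * M J t / INR (S (k + t)))) L.
Proof.
  intros HJ Hi. apply sumR_nonneg_bounded_cv with (2 ^ S (length J)).
  - intros t. pose proof (inv_INR_S_pow_pos t i). pose proof (M_nonneg J t).
    pose proof (Rinv_0_lt_compat _ (INR_S_pos (k + t))). unfold Rdiv.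
    apply Rmult_le_pos; [apply Rmult_le_pos|]; lra.
  - intros N. eapply Rle_trans; [|apply (mzv_head_bound J HJ (S i) N); lia].
    apply sumR_le; intros t. rewrite <- inv_pow_div by (apply not_0_INR; lia).
    pose proof (inv_INR_S_pow_pos t i). pose proof (M_nonneg J t).
    unfold Rdiv; apply Rmult_le_compat_l; [apply Rmult_le_pos; lra|].
    apply Rinv_le_contravar; [apply INR_S_pos | apply le_INR; lia].
Qed.

Lemma M_snoc_div_cv0 (k : nat) (J : list nat) (i : nat) :
  positive_parts J -> (1 <= i)%nat -> Un_cv (fun N => M (J ++ [i]) N / INR (S (k + N))) 0.
Proof.
  intros HJ Hi. destruct (snoc_weighted_sum_cv 0 J i HJ Hi) as [w Hw].
  apply Un_cv_0_squeeze with (fun N => M (J ++ [i]) N / INR (S N)).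
  - intros N. pose proof (M_nonneg (J ++ [i]) N). unfold Rdiv; split.
    + apply Rmult_le_pos; [lra | left; apply Rinv_0_lt_compat, INR_S_pos].
    + apply Rmult_le_compat_l; [lra|].
      apply Rinv_le_contravar; [apply INR_S_pos | apply le_INR; lia].
  - apply (Un_cv_ext (fun N => sumR (fun t => / INR (S t) ^ i * M J t) N / INR (S N))).
    + intros N; rewrite M_snoc; reflexivity.
    + exact (kronecker _ w Hw).
Qed.

Lemma eta_shifted_snoc_cv (k : nat) (J : list nat) (i : nat) :
  positive_parts J -> (1 <= i)%nat ->
  exists L, Un_cv (sumR (eta_shifted k (J ++ [i]))) L /\
            Un_cv (sumR (fun t => / INR (S t) ^ i * M J t / INR (S (k + t)))) L.
Proof.
  intros HJ Hi. destruct (snoc_weighted_sum_cv k J i HJ Hi) as [L HL].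
  exists L; split; [|exact HL].
  replace L with (L - 0) by ring.
  apply (Un_cv_ext (fun N => sumR (fun t => / INR (S t) ^ i * M J t / INR (S (k + t))) N
                             - M (J ++ [i]) N / INR (S (k + N)))).
  - intros N; rewrite <- eta_shifted_snoc_by_parts; ring.
  - apply CV_minus; [exact HL | exact (M_snoc_div_cv0 k J i HJ Hi)].
Qed.

Lemma eta11_snoc_mzv (J : list nat) (i : nat) : positive_parts J -> (1 <= i)%nat ->
  exists L, Un_cv (sumR (eta_shifted 0 (J ++ [i]))) L /\ Un_cv (mzv_partial (S i :: rev J)) L.
Proof.
  intros HJ Hi. destruct (eta_shifted_snoc_cv 0 J i HJ Hi) as [L [HL HR]].
  exists L; split; [exact HL|].
  refine (Un_cv_ext _ _ _ L HR). intros N; cbn [mzv_partial].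
  apply sumR_ext; intros t _; cbv zeta. rewrite mzv_partial_rev.
  apply inv_pow_div, not_0_INR; lia.
Qed.

Lemma eta011_one : Un_cv (sumR (eta_shifted 1 [1%nat])) 1.
Proof.
  destruct (eta_shifted_snoc_cv 1 [] 1 ltac:(constructor) (le_n 1)) as [L [HL HR]].
  replace 1 with L; [exact HL|].
  apply (UL_sequence _ _ _ HR). intros eps Heps.
  destruct (inv_INR_S_cv0 eps Heps) as [N0 HN0]. exists N0; intros N HN.
  specialize (HN0 N HN). unfold Rdist in *.
  rewrite (sumR_ext _ (fun t => / (INR (S t) * INR (S (S t))))), sumR_telescope_inv.
  - replace (1 - / INR (S N) - 1) with (- (/ INR (S N) - 0)) by ring.
    rewrite Rabs_Ropp; exact HN0.
  - intros t _. unfold M; cbn [Mr Nat.add]. pose proof (INR_S_pos t). pose proof (INR_S_pos (S t)).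
    field; lra.
Qed.

Lemma eta011_snoc_one (J : list nat) : positive_parts J -> J <> [] ->
  exists L, Un_cv (sumR (eta_shifted 1 (J ++ [1%nat]))) L /\ Un_cv (sumR (eta_shifted 1 J)) L.
Proof.
  intros HJ HJne. destruct (eta_shifted_snoc_cv 1 J 1 HJ (le_n 1)) as [L [HL HR]].
  exists L; split; [exact HL|].
  apply (Un_cv_ext (fun N => sumR (fun t => / INR (S t) ^ 1 * M J t / INR (S (1 + t))) (N + 1))).
  - intros N. rewrite Nat.add_1_r, sumR_succ_l.
    destruct (exists_last HJne) as [J' [j ->]]. rewrite M_snoc_0, Rmult_0_r, Rdiv_0_l, Rplus_0_l.
    apply sumR_ext; intros t _. unfold eta_shifted.
    pose proof (INR_S_pos (S t)). pose proof (INR_S_pos (S (S t))).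
    cbn [Nat.add]; field; lra.
  - exact (CV_shift' _ 1 _ HR).
Qed.

Lemma eta011_snoc_succ (J : list nat) (i : nat) : positive_parts J -> (1 <= i)%nat ->
  exists L Z L', Un_cv (sumR (eta_shifted 1 (J ++ [S i]))) L /\ Un_cv (M (J ++ [S i])) Z /\
                 Un_cv (sumR (eta_shifted 1 (J ++ [i]))) L' /\ L = Z - L'.
Proof.
  intros HJ Hi.
  destruct (eta_shifted_snoc_cv 1 J (S i) HJ ltac:(lia)) as [L [HL HR]].
  destruct (eta_shifted_snoc_cv 1 J i HJ Hi) as [L' [HL' HR']].
  destruct (growing_cv (M (J ++ [S i]))) as [Z HZ].
  - intros n; apply M_le_S.
  - exists (2 ^ S (length J)). intros x [N ->]. rewrite M_snoc.
    apply mzv_head_bound; [exact HJ | lia].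
  - exists L, Z, L'; repeat split; [exact HL | exact HZ | exact HL' |].
    apply (UL_sequence _ _ _ HR).
    refine (Un_cv_ext _ _ _ _ (CV_minus _ _ _ _ HZ HR')). intros N.
    rewrite M_snoc, <- sumR_minus. apply sumR_ext; intros t _.
    (* [n^-(i+1) / (n + 1) = n^-(i+1) - n^-i / (n + 1)] *)
    cbn [Nat.add]; rewrite (S_INR (S t)). pose proof (INR_S_pos t). cbn [pow].
    field; split; [apply pow_nonzero|]; lra.
Qed.

Theorem mainTheorem9 (I : list nat) (HI : composition I) :
  (exists L : R,
      infinite_sum (eta_term [1%nat; 1%nat] I) L /\
      Un_cv (mzv_partial (S (last I 0%nat) :: rev (removelast I))) L) /\
  (I = [1%nat] -> infinite_sum (eta_term [0%nat; 1%nat; 1%nat] I) 1) /\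
  (last I 0%nat = 1%nat -> (2 <= length I)%nat ->
     exists L : R,
       infinite_sum (eta_term [0%nat; 1%nat; 1%nat] I) L /\
       infinite_sum (eta_term [0%nat; 1%nat; 1%nat] (removelast I)) L) /\
  ((2 <= last I 0%nat)%nat ->
     exists L Z L' : R,
       infinite_sum (eta_term [0%nat; 1%nat; 1%nat] I) L /\
       Un_cv (mzv_partial (rev I)) Z /\
       infinite_sum (eta_term [0%nat; 1%nat; 1%nat]
                       (removelast I ++ [(last I 0%nat - 1)%nat])) L' /\
       L = Z - L').
Proof.
  destruct HI as [Hne Hpos]. destruct (exists_last Hne) as [J [i ->]].
  rewrite last_last, removelast_last.
  apply Forall_app in Hpos as [HJ Hi]; apply Forall_inv in Hi.
  pose proof (fun J => infinite_sum_sumR_ext _ _ (eta_term_011 J)) as Heta011.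
  split; [|split; [|split]].
  - destruct (eta11_snoc_mzv J i HJ Hi) as [L [HL HZ]].
    exists L; split; [exact (infinite_sum_sumR_ext _ _ (eta_term_11 _) _ HL) | exact HZ].
  - intros Heq. destruct J as [|j J]; [|destruct J; discriminate].
    injection Heq as ->. exact (Heta011 _ _ eta011_one).
  - intros -> Hlen. assert (HJne : J <> []) by (intros ->; simpl in Hlen; lia).
    destruct (eta011_snoc_one J HJ HJne) as [L [HL HL']].
    exists L; split; [exact (Heta011 _ _ HL) | exact (Heta011 _ _ HL')].
  - intros Hi2. destruct i as [|i]; [lia|]. rewrite Nat.sub_1_r; cbn [Nat.pred].
    destruct (eta011_snoc_succ J i HJ ltac:(lia)) as [L [Z [L' [HL [HZ [HL' HLZ]]]]]].
    exists L, Z, L'; repeat split; [exact (Heta011 _ _ HL) | | exact (Heta011 _ _ HL') | exact HLZ].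
    exact (Un_cv_ext _ _ (fun N => eq_sym (mzv_partial_rev _ N)) _ HZ).
Qed.
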